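(* Let $F_A=\sum_{i=0}^n\prod_{j=0}^n x_j^{a_{ij}}$ be an invertible polynomial satisfying the Calabi–Yau condition. Let $q_0,\dots,q_n$ be the dual weights (the weights of the transpose matrix $A^T$) and $d^T=\sum_{j=0}^n q_j$. Let $\Xi=\{(A^T)^{-1}\vec v : \vec v\in\mathbb{Z}^{n+1},\ v_0,\dots,v_n\ge1\}$ and $\mathrm{age}(\vec\xi)=\sum_i\xi_i$. Then the set $\{\vec\xi\in\Xi:\mathrm{age}(\vec\xi)=1\}$ consists of exactly one element, namely $\left(\frac{q_0}{d^T},\dots,\frac{q_n}{d^T}\right)$.
   Context: A polynomial $F_A=\sum_{i=0}^n\prod_{j=0}^n x_j^{a_{ij}}$ (one monomial per row of the nonnegative integer matrix $A$) is called invertible if $A$ is invertible, there exist positive integers $r_0,\dots,r_n$ (weights) such that $d:=\sum_{j=0}^n r_j a_{ij}$ is the same for every $i$, and $F_A$ has exactly one critical point, at the origin. It satisfies the Calabi–Yau condition if $d=\sum_{j=0}^n r_j$. The transpose $A^T$ then also defines an invertible polynomial satisfying the Calabi–Yau condition; its weights $q_0,\dots,q_n$ (positive integers with $\sum_{j} q_j a_{ji}=d^T$ for all $i$, where $d^T=\sum_j q_j$) are called the dual weights. *)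

From HB Require Import structures.
From mathcomp Require Import all_boot all_order all_algebra all_field.
From mathcomp Require Import mpoly.
Set Implicit Arguments. Unset Strict Implicit. Unset Printing Implicit Defensive.
Import Order.TTheory GRing.Theory Num.Theory.
Local Open Scope ring_scope.

Definition FA (n : nat) (A : 'M[nat]_(n.+1)) : {mpoly algC[n.+1]} :=
  \sum_(i < n.+1) \prod_(j < n.+1) 'X_j ^+ (A i j).

Definition critical_point (n : nat) (p : {mpoly algC[n]}) (x : 'I_n -> algC) :=
  forall k : 'I_n, (p^`M(k)).@[x] = 0.

Definition ratmx (n : nat) (A : 'M[nat]_(n.+1)) : 'M[rat]_(n.+1) :=
  map_mx (fun a : nat => a%:R) A.

Definition invertible_poly (n : nat) (A : 'M[nat]_(n.+1))
    (r : 'I_n.+1 -> nat) (d : nat) : Prop :=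
  [/\ ratmx A \in unitmx,
      (forall j, (0 < r j)%N),
      (forall i, (\sum_(j < n.+1) r j * A i j)%N = d) &
      (forall x : 'I_n.+1 -> algC, critical_point (FA A) x <-> x = (fun=> 0))].

Definition calabi_yau (n : nat) (r : 'I_n.+1 -> nat) (d : nat) : Prop :=
  d = (\sum_(j < n.+1) r j)%N.

(* q are dual weights: weights of A^T satisfying the CY condition,
   i.e. sum_j q_j a_ji = d^T := sum_j q_j for all i. *)
Definition dual_weights (n : nat) (A : 'M[nat]_(n.+1)) (q : 'I_n.+1 -> nat) : Prop :=
  (forall j, (0 < q j)%N) /\
  (forall i, (\sum_(j < n.+1) q j * A j i)%N = (\sum_(j < n.+1) q j)%N).

Definition in_Xi (n : nat) (A : 'M[nat]_(n.+1)) (xi : 'cV[rat]_(n.+1)) : Prop :=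
  exists v : 'cV[int]_(n.+1),
    (forall i, 1 <= v i 0) /\
    xi = invmx (ratmx A)^T *m map_mx (fun z : int => z%:~R) v.

Definition age (n : nat) (xi : 'cV[rat]_(n.+1)) : rat := \sum_(i < n.+1) xi i 0.

From HB Require Import structures.
From mathcomp Require Import all_boot all_order all_algebra all_field.
From mathcomp Require Import mpoly.
Set Implicit Arguments. Unset Strict Implicit. Unset Printing Implicit Defensive.
Import Order.TTheory GRing.Theory Num.Theory.
Local Open Scope ring_scope.

(* Put M := (A^T) over the rationals, so that Xi = M^-1 (Z_{>=1})^{n+1}.
   1. The weights r of A are a left eigenvector of M: sum_i r_i (M x)_i = d * age x.
      Hence for xi = M^-1 v we get sum_i r_i v_i = d * age xi, and under the
      Calabi-Yau condition d = sum_i r_i, age xi = 1 reads sum_i r_i v_i = sum_i r_i.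
   2. With positive weights r_i and integers v_i >= 1 this forces v = (1,...,1).
   3. The dual weights give M (q / d^T) = (1,...,1), so the unique age-one point
      of Xi is M^-1 (1,...,1) = q / d^T, whose age is indeed 1. *)

Lemma weighted_image_sum (R : comNzRingType) (m : nat) (M : 'M[R]_m)
    (w : 'I_m -> R) (c : R) :
  (forall k, \sum_i w i * M i k = c) ->
  forall x : 'cV[R]_m, \sum_i w i * (M *m x) i 0 = c * \sum_k x k 0.
Proof.
move=> Hw x; under eq_bigr => i _ do rewrite mxE big_distrr /=.
rewrite exchange_big big_distrr /=; apply: eq_bigr => k _.
by rewrite -(Hw k) big_distrl /=; apply: eq_bigr => i _; rewrite mulrA.
Qed.

Lemma weighted_image_age (n : nat) (A : 'M[nat]_(n.+1)) (r : 'I_n.+1 -> nat)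
    (d : nat) :
  (forall i, (\sum_(j < n.+1) r j * A i j)%N = d) ->
  forall x : 'cV[rat]_(n.+1),
    \sum_i (r i)%:R * ((ratmx A)^T *m x) i 0 = d%:R * age x.
Proof.
move=> Hr; apply: weighted_image_sum => k.
rewrite -(Hr k) natr_sum; apply: eq_bigr => j _.
by rewrite !mxE natrM.
Qed.

Lemma normalized_weights_solve (F : fieldType) (m : nat) (M : 'M[F]_m)
    (w : 'I_m -> F) (c : F) :
  c != 0 -> (forall i, \sum_j M i j * w j = c) ->
  M *m (\col_i (w i / c)) = const_mx 1.
Proof.
move=> c0 Hw; apply/matrixP => i z; rewrite !mxE.
under eq_bigr => j _ do rewrite mxE mulrA.
by rewrite -big_distrl /= Hw divff.
Qed.

(* Positive weights w and values u >= 1 with sum w u = sum w force u = 1: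
   the sum of the nonnegative terms w_i (u_i - 1) vanishes. *)
Lemma weighted_sum_ge1_eq (R : numDomainType) (m : nat) (w u : 'I_m -> R) :
  (forall i, 0 < w i) -> (forall i, 1 <= u i) ->
  \sum_i w i * u i = \sum_i w i -> forall i, u i = 1.
Proof.
move=> w_gt0 u_ge1 Hsum i.
have terms_ge0 j : true -> 0 <= w j * (u j - 1).
  by move=> _; rewrite mulr_ge0 ?subr_ge0 // ltW.
have sum0 : \sum_j w j * (u j - 1) = 0.
  under eq_bigr => j _ do rewrite mulrBr mulr1.
  by rewrite sumrB Hsum subrr.
have /eqP := psumr_eq0P terms_ge0 sum0 (i := i) isT.
by rewrite mulf_eq0 gt_eqF //= subr_eq0 => /eqP.
Qed.

Lemma dual_degree_gt0 (n : nat) (A : 'M[nat]_(n.+1)) (q : 'I_n.+1 -> nat) :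
  dual_weights A q -> (0 < \sum_(j < n.+1) q j)%N.
Proof.
case=> q_gt0 _; apply: (leq_trans (q_gt0 ord0)).
by rewrite (bigD1 ord0) //= leq_addr.
Qed.

Lemma dual_point_solves (n : nat) (A : 'M[nat]_(n.+1)) (q : 'I_n.+1 -> nat) :
  dual_weights A q ->
  (ratmx A)^T *m (\col_(i < n.+1) ((q i)%:R / (\sum_(j < n.+1) q j)%:R))
  = const_mx 1.
Proof.
move=> Hdw; have dT_gt0 := dual_degree_gt0 Hdw; case: Hdw => _ Hs.
apply: normalized_weights_solve => [|i]; first by rewrite pnatr_eq0 -lt0n.
rewrite -(Hs i) natr_sum; apply: eq_bigr => j _.
by rewrite !mxE natrM mulrC.
Qed.

Lemma age_dual_point (n : nat) (A : 'M[nat]_(n.+1)) (q : 'I_n.+1 -> nat) :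
  dual_weights A q ->
  age (\col_(i < n.+1) ((q i)%:R / (\sum_(j < n.+1) q j)%:R)) = 1.
Proof.
move=> /dual_degree_gt0 dT_gt0; rewrite /age.
under eq_bigr => i _ do rewrite mxE.
by rewrite -big_distrl /= -natr_sum divff // pnatr_eq0 -lt0n.
Qed.

Theorem mainTheorem2 (n : nat) (A : 'M[nat]_(n.+1))
    (r : 'I_n.+1 -> nat) (d : nat) (q : 'I_n.+1 -> nat) :
  invertible_poly A r d -> calabi_yau r d -> dual_weights A q ->
  forall xi : 'cV[rat]_(n.+1),
    (in_Xi A xi /\ age xi = 1) <->
    xi = \col_(i < n.+1) ((q i)%:R / (\sum_(j < n.+1) q j)%:R).
Proof.
move=> [A_unit r_gt0 Hr _] Hcy Hdw xi.
have AT_unit : (ratmx A)^T \in unitmx by rewrite unitmx_tr.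
have dual_pt := dual_point_solves Hdw.
set t := \col_(i < n.+1) _ in dual_pt *.
have {}dual_pt : t = invmx (ratmx A)^T *m const_mx 1.
  by rewrite -dual_pt mulKmx.
split=> [[[v [v_ge1 ->]] age1] | ->]; last first.
  split; last exact: age_dual_point Hdw.
  exists (const_mx 1); split=> [i|]; first by rewrite mxE.
  by rewrite dual_pt; congr (_ *m _); apply/matrixP => i j; rewrite !mxE.
set W := map_mx _ v in age1 *.
have W1 : W = const_mx 1.
  have := weighted_image_age Hr (invmx (ratmx A)^T *m W).
  rewrite mulKVmx // age1 mulr1 Hcy natr_sum => Hsum.
  apply/matrixP => i z; rewrite (ord1 z) [RHS]mxE.
  apply: (weighted_sum_ge1_eq (u := fun j => W j 0) _ _ Hsum) => j.
    by rewrite ltr0n r_gt0.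
  by rewrite /W mxE ler1z.
by rewrite W1 dual_pt.
Qed.
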